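(* Let $M\in\mathrm{SO}(2n,2n-1)$ be totally positive (all minors of $M$ in the standard basis are strictly positive). Then the middle diagonal entry satisfies $M_{2n,2n}\ge 1$.
   Context: $\mathrm{SO}(2n,2n-1)$ is the group of determinant-one real $(4n-1)\times(4n-1)$ matrices $M$ with $M^TJM=J$, where $J$ is the antidiagonal matrix with $J_{i,4n-i}=(-1)^i$ and all other entries $0$. *)

From mathcomp Require Import all_boot all_order all_algebra.
From mathcomp Require Import all_classical all_reals.
Set Implicit Arguments. Unset Strict Implicit. Unset Printing Implicit Defensive.
Import Order.TTheory GRing.Theory Num.Theory.
Local Open Scope ring_scope.

Definition Jform (R : ringType) (n : nat) : 'M[R]_(4 * n - 1) :=
  \matrix_(i, j) (if (i.+1 + j.+1 == 4 * n)%N then (-1) ^+ i.+1 else 0).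

Definition in_SO (R : comRingType) (n : nat) (M : 'M[R]_(4 * n - 1)) : Prop :=
  \det M = 1 /\ M^T *m Jform R n *m M = Jform R n.

Definition strictly_increasing (k N : nat) (f : 'I_k -> 'I_N) : Prop :=
  forall i j : 'I_k, (i < j)%N -> (f i < f j)%N.

Definition totally_positive (R : realDomainType) (N : nat) (M : 'M[R]_N) : Prop :=
  forall (k : nat) (f g : 'I_k.+1 -> 'I_N),
    strictly_increasing f -> strictly_increasing g ->
    0 < \det (mxsub f g M).

From mathcomp Require Import all_boot all_order all_algebra all_fingroup.
From mathcomp Require Import all_classical all_reals.
From mathcomp Require Import zify lra.
Set Implicit Arguments. Unset Strict Implicit. Unset Printing Implicit Defensive.
Import Order.TTheory GRing.Theory Num.Theory.
Local Open Scope ring_scope.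

(* From M^T J M = J and J^2 = 1 one gets M^-1 = J M^T J, so for det M = 1 the
   cofactor of the middle entry equals the middle entry of J M^T J, which is
   M_{2n,2n} itself because J is antidiagonal with signs squaring to 1.
   Totally positive matrices satisfy Koteljanskii's inequality
   det M <= M_{mm} * cofactor_{mm}(M), proved by induction using that Schur
   complements of totally positive matrices are totally positive (and
   reversing rows and columns when m is the first index).  Hence
   1 = det M <= M_{2n,2n}^2 with M_{2n,2n} > 0. *)

(* Extends an index selection by the pivot index 0: a minor of the Schur
   complement of A comes from the minor of A bordered by the pivot row and
   column. *)
Definition lift0_ext k n (f : 'I_k -> 'I_n) (i : 'I_k.+1) : 'I_n.+1 :=
  if unlift ord0 i is Some j then lift ord0 (f j) else ord0.

Lemma lift0_ext0 k n (f : 'I_k -> 'I_n) : lift0_ext f ord0 = ord0.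
Proof. by rewrite /lift0_ext unlift_none. Qed.

Lemma lift0_extS k n (f : 'I_k -> 'I_n) j :
  lift0_ext f (lift ord0 j) = lift ord0 (f j).
Proof. by rewrite /lift0_ext liftK. Qed.

Lemma lift0_ext_lift n (m : 'I_n.+1) : lift0_ext (lift m) =1 lift (lift ord0 m).
Proof.
move=> i; case: (unliftP ord0 i) => [i'|] ->; rewrite ?lift0_ext0 ?lift0_extS;
  by apply/val_inj; rewrite /= /bump /= ?leq_add2l // addnCA.
Qed.

Lemma lift0_ext_incr k n (f : 'I_k -> 'I_n) :
  strictly_increasing f -> strictly_increasing (lift0_ext f).
Proof.
move=> incr_f i j; case: (unliftP ord0 i) => [i'|] ->;
  case: (unliftP ord0 j) => [j'|] ->; rewrite ?lift0_ext0 ?lift0_extS //=.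
by rewrite !ltnS; apply: incr_f.
Qed.

Lemma lift_incr n (h : 'I_n.+1) : strictly_increasing (lift h).
Proof.
move=> i j /= lt_ij; rewrite /bump.
by case: (leqP h i); case: (leqP h j) => /= ? ?; lia.
Qed.

Section SchurComplement.
Variable F : fieldType.

Definition schur_complement n (A : 'M[F]_(1 + n)) : 'M[F]_n :=
  drsubmx A - (A ord0 ord0)^-1 *: (dlsubmx A *m ursubmx A).

Lemma schur_complementE n (A : 'M[F]_(1 + n)) i j :
  schur_complement A i j = A (lift ord0 i) (lift ord0 j)
    - (A ord0 ord0)^-1 * (A (lift ord0 i) ord0 * A ord0 (lift ord0 j)).
Proof.
have rshiftE m (k : 'I_m) : rshift 1 k = lift ord0 k by apply/val_inj.
have lshiftE m : lshift m (ord0 : 'I_1) = ord0 by apply/val_inj.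
by rewrite !mxE big_ord1 !mxE !rshiftE !lshiftE.
Qed.

Lemma det_schur_complement n (A : 'M[F]_(1 + n)) : A ord0 ord0 != 0 ->
  \det A = A ord0 ord0 * \det (schur_complement A).
Proof.
move=> a_neq0.
have ulA : ulsubmx A = (A ord0 ord0)%:M.
  by apply/matrixP => i j; rewrite !ord1 !mxE /=; congr (A _ _); apply/val_inj.
pose L := block_mx 1%:M 0 ((A ord0 ord0)^-1 *: dlsubmx A) (1%:M : 'M_n).
pose U := block_mx (ulsubmx A) (ursubmx A) 0 (schur_complement A).
have LU : A = L *m U.
  rewrite /L /U mulmx_block !mul1mx !mul0mx ?addr0 ?mulmx0 ?add0r ?mulmx1.
  rewrite ulA -scalemxAl mul_mx_scalar scalerA mulVf // scale1r -ulA.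
  by rewrite -scalemxAl /schur_complement addrC subrK submxK.
rewrite {1}LU det_mulmx det_lblock det_ublock !det1 mul1r ulA det_mx11 mxE /=.
by rewrite mul1r mulr1n.
Qed.

Lemma mxsub_schur_complement k n (f g : 'I_k -> 'I_n) (A : 'M[F]_(1 + n)) :
  mxsub f g (schur_complement A)
  = schur_complement (mxsub (lift0_ext f) (lift0_ext g) A : 'M_(1 + k)).
Proof.
apply/matrixP => i j; rewrite mxE !schur_complementE !mxE.
by rewrite !lift0_extS !lift0_ext0.
Qed.

Lemma det_minor_lift0 n (A : 'M[F]_(1 + n.+1)) (m : 'I_n.+1) :
  A ord0 ord0 != 0 ->
  \det (mxsub (lift (lift ord0 m)) (lift (lift ord0 m)) A : 'M_(1 + n))
  = A ord0 ord0 * \det (mxsub (lift m) (lift m) (schur_complement A)).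
Proof.
move=> a_neq0; rewrite mxsub_schur_complement.
rewrite -(eq_mxsub _ _ (lift0_ext_lift m) (lift0_ext_lift m)).
by rewrite det_schur_complement mxE lift0_ext0.
Qed.

End SchurComplement.

Definition rev_mx (T : Type) N (A : 'M[T]_N) : 'M[T]_N :=
  \matrix_(i, j) A (rev_ord i) (rev_ord j).

Lemma det_rev_mx (R : comRingType) N (A : 'M[R]_N) : \det (rev_mx A) = \det A.
Proof.
pose s := perm (@rev_ord_inj N).
have -> : rev_mx A = row_perm s (col_perm s A).
  by apply/matrixP => i j; rewrite !mxE !permE.
rewrite row_permE col_permE !det_mulmx !det_perm odd_permV mulrCA.
by rewrite -expr2 sqrr_sign mulr1.
Qed.

Lemma lift_rev_ord n (m : 'I_n.+1) (i : 'I_n) :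
  lift (rev_ord m) (rev_ord i) = rev_ord (lift m i).
Proof.
apply/val_inj; rewrite /= /bump; have := ltn_ord m; have := ltn_ord i.
by case: (leqP m i); case: leqP => /= ? ? ? ?; lia.
Qed.

Lemma mxsub_lift_rev_mx (T : Type) n (A : 'M[T]_n.+1) (m : 'I_n.+1) :
  mxsub (lift (rev_ord m)) (lift (rev_ord m)) (rev_mx A)
  = rev_mx (mxsub (lift m) (lift m) A) :> 'M_n.
Proof. by apply/matrixP => i j; rewrite !mxE -!lift_rev_ord !rev_ordK. Qed.

Lemma cofactor_diag (T : comRingType) n (A : 'M[T]_n.+1) (m : 'I_n.+1) :
  cofactor A m m = \det (mxsub (lift m) (lift m) A).
Proof.
rewrite /cofactor -signr_odd addnn odd_double mul1r.
by congr (\det _); apply/matrixP => i j; rewrite !mxE.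
Qed.

Section TotalPositivity.
Variable R : realFieldType.

Lemma tp_minor_gt0 N (A : 'M[R]_N) k (f g : 'I_k -> 'I_N) :
  totally_positive A -> strictly_increasing f -> strictly_increasing g ->
  0 < \det (mxsub f g A).
Proof. by case: k f g => [|k] f g tpA; [rewrite det_mx00 ltr01 | exact: tpA]. Qed.

Lemma tp_entry_gt0 N (A : 'M[R]_N) i j : totally_positive A -> 0 < A i j.
Proof.
move=> tpA; have := tpA 0%N (fun _ => i) (fun _ => j).
by rewrite det_mx11 mxE; apply=> x y; rewrite !ord1.
Qed.

Lemma tp_schur_complement n (A : 'M[R]_(1 + n)) :
  totally_positive A -> totally_positive (schur_complement A).
Proof.
move=> tpA k f g incr_f incr_g; rewrite mxsub_schur_complement.
set B : 'M_(1 + k.+1) := mxsub _ _ A.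
have b_gt0 : 0 < B ord0 ord0 by rewrite mxE !lift0_ext0; exact: tp_entry_gt0.
have := tpA _ _ _ (lift0_ext_incr incr_f) (lift0_ext_incr incr_g).
by rewrite -/B (det_schur_complement (lt0r_neq0 b_gt0)) pmulr_rgt0.
Qed.

Lemma rev_ord_incr k N (f : 'I_k -> 'I_N) : strictly_increasing f ->
  strictly_increasing (fun i => rev_ord (f (rev_ord i))).
Proof.
move=> incr_f i j lt_ij /=.
have : (f (rev_ord j) < f (rev_ord i))%N.
  by apply: incr_f => /=; have := ltn_ord i; have := ltn_ord j; lia.
by have := ltn_ord (f (rev_ord i)); have := ltn_ord (f (rev_ord j)); lia.
Qed.

Lemma tp_rev_mx N (A : 'M[R]_N) : totally_positive A -> totally_positive (rev_mx A).
Proof.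
move=> tpA k f g incr_f incr_g.
have -> : mxsub f g (rev_mx A)
    = rev_mx (mxsub (fun i => rev_ord (f (rev_ord i)))
                    (fun j => rev_ord (g (rev_ord j))) A).
  by apply/matrixP => i j; rewrite !mxE !rev_ordK.
by rewrite det_rev_mx; apply: tpA; apply: rev_ord_incr.
Qed.

Lemma tp_schur_complement_diag_le n (A : 'M[R]_(1 + n)) (m : 'I_n) :
  totally_positive A -> schur_complement A m m <= A (lift ord0 m) (lift ord0 m).
Proof.
move=> tpA; rewrite schur_complementE gerBl.
by rewrite ltW // !mulr_gt0 ?invr_gt0 //; apply: tp_entry_gt0.
Qed.

Definition koteljanskii_at n (A : 'M[R]_n.+1) (m : 'I_n.+1) :=
  \det A <= A m m * \det (mxsub (lift m) (lift m) A : 'M_n).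

Lemma koteljanskii_rev_mx n (A : 'M[R]_n.+1) (m : 'I_n.+1) :
  koteljanskii_at (rev_mx A) (rev_ord m) -> koteljanskii_at A m.
Proof.
by rewrite /koteljanskii_at mxsub_lift_rev_mx !det_rev_mx mxE !rev_ordK.
Qed.

Lemma koteljanskii_lift0 n (A : 'M[R]_n.+2) (m : 'I_n.+1) :
  (forall (B : 'M[R]_n.+1) m', totally_positive B -> koteljanskii_at B m') ->
  totally_positive A -> koteljanskii_at A (lift ord0 m).
Proof.
move=> IH tpA; rewrite /koteljanskii_at.
set a := A ord0 ord0; set S := schur_complement (A : 'M_(1 + n.+1)).
have a_gt0 : 0 < a by apply: tp_entry_gt0.
have tpS : totally_positive S by apply: tp_schur_complement.
have minorS_gt0 : 0 < \det (mxsub (lift m) (lift m) S : 'M_n).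
  by apply: tp_minor_gt0 => //; apply: lift_incr.
rewrite (det_schur_complement (lt0r_neq0 a_gt0)) -/a -/S.
rewrite (det_minor_lift0 _ (lt0r_neq0 a_gt0)) -/a -/S mulrCA ler_pM2l //.
apply: le_trans (IH S m tpS) _.
by rewrite ler_pM2r //; apply: tp_schur_complement_diag_le.
Qed.

Lemma tp_koteljanskii n (A : 'M[R]_n.+1) (m : 'I_n.+1) :
  totally_positive A -> koteljanskii_at A m.
Proof.
elim: n A m => [|n IH] A m tpA.
  by rewrite /koteljanskii_at det_mx11 det_mx00 mulr1 !ord1.
wlog m_neq0 : A m tpA / m != ord0.
  move=> wlog_m; case: (eqVneq m ord0) => [m0|]; last exact: wlog_m.
  by apply: koteljanskii_rev_mx; apply: wlog_m; [apply: tp_rev_mx | rewrite m0].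
by case: (unliftP ord0 m) m_neq0 => [m'|] -> //= _; apply: koteljanskii_lift0.
Qed.

Lemma tp_det_le_mul_cofactor N (A : 'M[R]_N) (m : 'I_N) :
  totally_positive A -> \det A <= A m m * cofactor A m m.
Proof.
case: N A m => [|N] A m tpA; first by case: m.
by rewrite cofactor_diag; apply: tp_koteljanskii.
Qed.

End TotalPositivity.

Section SplitOrthogonal.
Variable R : comRingType.
Variable n : nat.

Lemma JformE (i j : 'I_(4 * n - 1)) :
  Jform R n i j = if j == rev_ord i then (-1) ^+ i.+1 else 0.
Proof.
rewrite mxE; congr (if _ then _ else _); have := ltn_ord i; have := ltn_ord j.
by move=> lt_j lt_i; apply/eqP/eqP => [eq_ij|->]; [apply/val_inj|] => /=; lia.
Qed.

Lemma Jform_mulmxE (B : 'M[R]_(4 * n - 1)) i j :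
  (Jform R n *m B) i j = (-1) ^+ i.+1 * B (rev_ord i) j.
Proof.
rewrite mxE (bigD1 (rev_ord i)) //= JformE eqxx big1 ?addr0 // => k /negbTE neq_k.
by rewrite JformE neq_k mul0r.
Qed.

Lemma mulmx_JformE (B : 'M[R]_(4 * n - 1)) i j :
  (B *m Jform R n) i j = B i (rev_ord j) * (-1) ^+ (rev_ord j).+1.
Proof.
rewrite mxE (bigD1 (rev_ord j)) //= JformE rev_ordK eqxx big1 ?addr0 // => k neq_k.
rewrite JformE; case: eqP => [eq_j|_]; last by rewrite mulr0.
by move: neq_k; rewrite eq_j rev_ordK eqxx.
Qed.

Lemma Jform_mulmx_Jform : Jform R n *m Jform R n = 1%:M.
Proof.
apply/matrixP => i j; rewrite Jform_mulmxE JformE rev_ordK !mxE eq_sym.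
case: eqP => [->|_]; last by rewrite mulr0.
have := ltn_ord j => lt_j.
rewrite -exprD (_ : (j.+1 + (rev_ord j).+1 = (2 * n) * 2)%N) /=; last by lia.
by rewrite exprM sqrr_sign.
Qed.

Lemma Jform_conj_mid_entry (B : 'M[R]_(4 * n - 1)) (i : 'I_(4 * n - 1)) :
  rev_ord i = i -> (Jform R n *m B *m Jform R n) i i = B i i.
Proof.
move=> rev_i; rewrite mulmx_JformE Jform_mulmxE rev_i.
by rewrite mulrC mulrA -expr2 sqrr_sign mul1r.
Qed.

Lemma adj_SO (M : 'M[R]_(4 * n - 1)) :
  in_SO M -> \adj M = Jform R n *m M^T *m Jform R n.
Proof.
move=> [detM orthM].
have invM : Jform R n *m M^T *m Jform R n *m M = 1%:M.
  by rewrite -!mulmxA (mulmxA M^T) orthM Jform_mulmx_Jform.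
by rewrite -[\adj M]mul1mx -invM -(mulmxA _ M) mul_mx_adj detM mulmx1.
Qed.

End SplitOrthogonal.

Theorem lemma4p7 (R : realType) (n : nat) (hn : (0 < n)%N)
  (M : 'M[R]_(4 * n - 1)) (hlt : (2 * n - 1 < 4 * n - 1)%N) :
  in_SO M -> totally_positive M ->
  1 <= M (Ordinal hlt) (Ordinal hlt).
Proof.
move=> soM tpM; set m := Ordinal hlt.
have rev_m : rev_ord m = m by apply/val_inj => /=; lia.
have cofM : cofactor M m m = M m m.
  by have := Jform_conj_mid_entry M^T rev_m; rewrite -adj_SO // !mxE.
have := tp_det_le_mul_cofactor m tpM; rewrite cofM (proj1 soM).
by have := tp_entry_gt0 m m tpM; nra.
Qed.
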